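(* Let $C$ be a cofibrant object of a P-category $(\mathcal{C},P,\mathcal{F},\mathcal{W})$. Every weak equivalence $w:A\to B$ of $\mathcal{C}$ induces a bijection $w_*:[C,A]\to[C,B]$, $[f]\mapsto[wf]$, where $[C,X]=\mathcal{C}(C,X)/\simeq$.
   Context: Let $\mathcal{C}$ be a category with finite products and a final object $e$. A functorial path is a functor $P:\mathcal{C}\to\mathcal{C}$ with natural transformations $\iota:1\to P$, $\delta^0,\delta^1:P\to1$, $\delta^0\iota=\delta^1\iota=1$; a homotopy $h:f\simeq g$ between $f,g:A\to B$ is $h:A\to P(B)$ with $\delta^0_Bh=f$, $\delta^1_Bh=g$ (for $C$ cofibrant this is an equivalence relation on $\mathcal{C}(C,X)$). The path is equipped with a symmetry $\tau$ (natural automorphism of $P$, $\tau\tau=1$, $\tau\iota=\iota$, $\delta^k\tau=\delta^{1-k}$), a coproduct $c:P\to P^2$ ($c_{P(A)}c_A=P(c_A)c_A$, $\delta^1_{P(A)}c_A=P(\delta^1_A)c_A=1$, $c_A\iota_A=\iota_{P(A)}\iota_A$, $\delta^0_{P(A)}c_A=P(\delta^0_A)c_A=\iota_A\delta^0_A$), an interchange $\mu$ (natural automorphism of $P^2$, $\delta^k_{P(A)}\mu_A=P(\delta^k_A)$, $P(\delta^k_A)\mu_A=\delta^k_{P(A)}$) and a folding map $\nabla:P^2\to P$ ($\delta^k_A\nabla_A=\delta^k_A\delta^k_{P(A)}$, $\nabla_A\iota_{P(A)}=1$). A P-category has classes $\mathcal{F}$ (fibrations), $\mathcal{W}$ (weak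 equivalences) with: (P$_1$) both contain isomorphisms and are closed under composition, $\mathcal{W}$ satisfies 2-out-of-3, each $A\to e$ is a fibration; (P$_2$) $\iota_A\in\mathcal{W}$, $(\delta^0_A,\delta^1_A)$ is a fibration, $\delta^0_A,\delta^1_A$ are trivial fibrations; (P$_3$) pullbacks along fibrations exist, the pulled-back map is a (trivial) fibration if the original is, and the other projection is a weak equivalence if the map pulled back along is; (P$_4$) $P$ preserves fibrations, weak equivalences and fibre products; (P$_5$) for each fibration $v:A\to B$ the map $((\delta^0_A,\delta^1_A),P(v)):P(A)\to(A\times A)\times_{B\times B}P(B)$ is a fibration. An object $C$ is cofibrant if for every trivial fibration $w:A\to B$ and every $f:C\to B$ there is $g:C\to A$ with $wg=f$. *)

Set Implicit Arguments.
Set Universe Polymorphism.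

Record Category := {
  ob :> Type;
  hom : ob -> ob -> Type;
  idm : forall A, hom A A;
  comp : forall A B C, hom B C -> hom A B -> hom A C;
  comp_id_l : forall A B (f : hom A B), comp (idm B) f = f;
  comp_id_r : forall A B (f : hom A B), comp f (idm A) = f;
  comp_assoc : forall A B C D (h : hom C D) (g : hom B C) (f : hom A B),
      comp h (comp g f) = comp (comp h g) f
}.

Arguments hom {c} _ _.
Arguments idm {c} _.
Arguments comp {c A B C} _ _.
Notation "g ∘ f" := (comp g f) (at level 40, left associativity).

Section CatDefs.
Context {K : Category}.

Definition is_iso {A B : K} (f : hom A B) : Prop :=
  exists g : hom B A, g ∘ f = idm A /\ f ∘ g = idm B.

Definition is_pullback {X Y Z Q : K} (f : hom X Z) (g : hom Y Z)
  (p1 : hom Q X) (p2 : hom Q Y) : Prop :=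
  f ∘ p1 = g ∘ p2 /\
  forall (T : K) (a : hom T X) (b : hom T Y), f ∘ a = g ∘ b ->
    exists! u : hom T Q, p1 ∘ u = a /\ p2 ∘ u = b.

Record FinProducts := {
  fin : K;
  to_fin : forall A : K, hom A fin;
  to_fin_unique : forall A (f : hom A fin), f = to_fin A;
  prod : K -> K -> K;
  pr1 : forall A B, hom (prod A B) A;
  pr2 : forall A B, hom (prod A B) B;
  pair : forall T A B, hom T A -> hom T B -> hom T (prod A B);
  pair_pr1 : forall T A B (f : hom T A) (g : hom T B), pr1 A B ∘ pair T A B f g = f;
  pair_pr2 : forall T A B (f : hom T A) (g : hom T B), pr2 A B ∘ pair T A B f g = g;
  pair_unique : forall T A B (f : hom T A) (g : hom T B) (h : hom T (prod A B)),
      pr1 A B ∘ h = f -> pr2 A B ∘ h = g -> h = pair T A B f g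
}.
Arguments pair _ {T A B} _ _.

Record Functor := {
  fob :> K -> K;
  fmap : forall A B, hom A B -> hom (fob A) (fob B);
  fmap_id : forall A, fmap A A (idm A) = idm (fob A);
  fmap_comp : forall (A B C : K) (g : hom B C) (f : hom A B),
      fmap A C (g ∘ f) = fmap B C g ∘ fmap A B f
}.
Arguments fmap _ {A B} _.

Definition natural (F G : Functor) (t : forall A : K, hom (F A) (G A)) : Prop :=
  forall (A B : K) (f : hom A B), t B ∘ fmap F f = fmap G f ∘ t A.

Definition compF (F G : Functor) : Functor.
Proof.
  refine {| fob := fun A => F (G A);
            fmap := fun A B f => fmap F (fmap G f) |}.
  - intros A. rewrite !fmap_id. reflexivity.
  - intros A B C g f. rewrite !fmap_comp. reflexivity.
Defined.

Definition idF : Functor.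
Proof.
  refine {| fob := fun A => A; fmap := fun A B f => f |}.
  - reflexivity.
  - reflexivity.
Defined.

End CatDefs.
Arguments pair {K} _ {T A B} _ _.
Arguments fmap {K} _ {A B} _.
Arguments pr1 {K} _ _ _.
Arguments pr2 {K} _ _ _.
Arguments to_fin {K} _ _.
Arguments FinProducts : clear implicits.
Arguments Functor : clear implicits.

Record PCategory := {
  cat :> Category;
  fp : FinProducts cat;
  P : Functor cat;
  iota : forall A : cat, hom A (P A);
  delta0 : forall A : cat, hom (P A) A;
  delta1 : forall A : cat, hom (P A) A;
  iota_nat : natural idF P iota;
  delta0_nat : natural P idF delta0;
  delta1_nat : natural P idF delta1;
  delta0_iota : forall A, delta0 A ∘ iota A = idm A;
  delta1_iota : forall A, delta1 A ∘ iota A = idm A;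
  tau : forall A : cat, hom (P A) (P A);
  tau_nat : natural P P tau;
  tau_tau : forall A, tau A ∘ tau A = idm (P A);
  tau_iota : forall A, tau A ∘ iota A = iota A;
  delta0_tau : forall A, delta0 A ∘ tau A = delta1 A;
  delta1_tau : forall A, delta1 A ∘ tau A = delta0 A;
  cop : forall A : cat, hom (P A) (P (P A));
  cop_nat : natural P (compF P P) cop;
  cop_coassoc : forall A, cop (P A) ∘ cop A = fmap P (cop A) ∘ cop A;
  cop_delta1_l : forall A, delta1 (P A) ∘ cop A = idm (P A);
  cop_delta1_r : forall A, fmap P (delta1 A) ∘ cop A = idm (P A);
  cop_iota : forall A, cop A ∘ iota A = iota (P A) ∘ iota A;
  cop_delta0_l : forall A, delta0 (P A) ∘ cop A = iota A ∘ delta0 A;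
  cop_delta0_r : forall A, fmap P (delta0 A) ∘ cop A = iota A ∘ delta0 A;
  mu : forall A : cat, hom (P (P A)) (P (P A));
  mu_inv : forall A : cat, hom (P (P A)) (P (P A));
  mu_nat : natural (compF P P) (compF P P) mu;
  mu_inv_l : forall A, mu_inv A ∘ mu A = idm (P (P A));
  mu_inv_r : forall A, mu A ∘ mu_inv A = idm (P (P A));
  mu_delta0_l : forall A, delta0 (P A) ∘ mu A = fmap P (delta0 A);
  mu_delta1_l : forall A, delta1 (P A) ∘ mu A = fmap P (delta1 A);
  mu_delta0_r : forall A, fmap P (delta0 A) ∘ mu A = delta0 (P A);
  mu_delta1_r : forall A, fmap P (delta1 A) ∘ mu A = delta1 (P A);
  fold : forall A : cat, hom (P (P A)) (P A);
  fold_nat : natural (compF P P) P fold;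
  fold_delta0 : forall A, delta0 A ∘ fold A = delta0 A ∘ delta0 (P A);
  fold_delta1 : forall A, delta1 A ∘ fold A = delta1 A ∘ delta1 (P A);
  fold_iota : forall A, fold A ∘ iota (P A) = idm (P A);
  Fib : forall A B : cat, hom A B -> Prop;
  WE : forall A B : cat, hom A B -> Prop;
  Fib_iso : forall (A B : cat) (f : hom A B), is_iso f -> Fib _ _ f;
  WE_iso : forall (A B : cat) (f : hom A B), is_iso f -> WE _ _ f;
  Fib_comp : forall (A B C : cat) (g : hom B C) (f : hom A B), Fib _ _ f -> Fib _ _ g -> Fib _ _ (g ∘ f);
  WE_comp : forall (A B C : cat) (g : hom B C) (f : hom A B), WE _ _ f -> WE _ _ g -> WE _ _ (g ∘ f);
  WE_2of3_l : forall (A B C : cat) (g : hom B C) (f : hom A B), WE _ _ f -> WE _ _ (g ∘ f) -> WE _ _ g;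
  WE_2of3_r : forall (A B C : cat) (g : hom B C) (f : hom A B), WE _ _ g -> WE _ _ (g ∘ f) -> WE _ _ f;
  Fib_final : forall A, Fib _ _ (to_fin fp A);
  WE_iota : forall A, WE _ _ (iota A);
  Fib_delta01 : forall A, Fib _ _ (pair fp (delta0 A) (delta1 A));
  Fib_delta0 : forall A, Fib _ _ (delta0 A);
  WE_delta0 : forall A, WE _ _ (delta0 A);
  Fib_delta1 : forall A, Fib _ _ (delta1 A);
  WE_delta1 : forall A, WE _ _ (delta1 A);
  pullback_exists : forall (X E Y : cat) (f : hom X Y) (p : hom E Y), Fib _ _ p ->
      exists (Q : cat) (p' : hom Q X) (f' : hom Q E), is_pullback f p p' f';
  pullback_Fib : forall (X E Y Q : cat) (f : hom X Y) (p : hom E Y) (p' : hom Q X) (f' : hom Q E),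
      is_pullback f p p' f' -> Fib _ _ p -> Fib _ _ p';
  pullback_WE : forall (X E Y Q : cat) (f : hom X Y) (p : hom E Y) (p' : hom Q X) (f' : hom Q E),
      is_pullback f p p' f' -> Fib _ _ p -> WE _ _ p -> WE _ _ p';
  pullback_WE_other : forall (X E Y Q : cat) (f : hom X Y) (p : hom E Y) (p' : hom Q X) (f' : hom Q E),
      is_pullback f p p' f' -> Fib _ _ p -> WE _ _ f -> WE _ _ f';
  P_Fib : forall (A B : cat) (f : hom A B), Fib _ _ f -> Fib _ _ (fmap P f);
  P_WE : forall (A B : cat) (f : hom A B), WE _ _ f -> WE _ _ (fmap P f);
  P_pullback : forall (X Y Z Q : cat) (f : hom X Z) (g : hom Y Z) (p1 : hom Q X) (p2 : hom Q Y),
      is_pullback f g p1 p2 -> is_pullback (fmap P f) (fmap P g) (fmap P p1) (fmap P p2);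
  (* P5 : for a fibration v : A -> B, the induced map
     P(A) -> (A x A) x_{B x B} P(B) is a fibration (for any choice of the
     fibre product Q with projections q1, q2). *)
  P5 : forall (A B : cat) (v : hom A B), Fib _ _ v ->
      forall (Q : cat) (q1 : hom Q (prod fp A A)) (q2 : hom Q (P B)),
      is_pullback (pair fp (v ∘ pr1 fp A A) (v ∘ pr2 fp A A))
                  (pair fp (delta0 B) (delta1 B)) q1 q2 ->
      forall u : hom (P A) Q,
        q1 ∘ u = pair fp (delta0 A) (delta1 A) -> q2 ∘ u = fmap P v ->
        Fib _ _ u
}.

Arguments Fib {p0} {A B} _.
Arguments WE {p0} {A B} _.

Section PDefs.
Context {PC : PCategory}.

Definition homotopic {A B : PC} (f g : hom A B) : Prop :=
  exists h : hom A (P PC B), delta0 PC B ∘ h = f /\ delta1 PC B ∘ h = g.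

Definition cofibrant (C : PC) : Prop :=
  forall (A B : PC) (w : hom A B), Fib w -> WE w ->
  forall f : hom C B, exists g : hom C A, w ∘ g = f.

End PDefs.


(* Factor w as w = q ∘ j through the mapping path object Q = A ×_B P(B):
   j = (1, ι w) is a weak equivalence split by the trivial fibration Q -> A,
   and q = δ1 ∘ pr is a trivial fibration homotopic to w ∘ pr.  A trivial
   fibration q : Q -> B induces a surjection on [C,-] by cofibrancy of C, and
   an injection because, by (P5) and 2-out-of-3, the comparison map
   P(Q) -> (Q × Q) ×_{B × B} P(B) is again a trivial fibration, against which
   a homotopy between q a and q b lifts to one between a and b. *)

Section Products.
Context {K : Category} (F : FinProducts K).

Lemma pair_comp (T S X Y : K) (f : hom S X) (g : hom S Y) (h : hom T S) :
  pair F f g ∘ h = pair F (f ∘ h) (g ∘ h).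
Proof.
  apply pair_unique.
  - rewrite comp_assoc, pair_pr1; reflexivity.
  - rewrite comp_assoc, pair_pr2; reflexivity.
Qed.

Lemma pair_eta (T X Y : K) (a : hom T (prod F X Y)) :
  pair F (pr1 F X Y ∘ a) (pr2 F X Y ∘ a) = a.
Proof. symmetry; apply pair_unique; reflexivity. Qed.

Lemma pair_inj (T X Y : K) (f f' : hom T X) (g g' : hom T Y) :
  pair F f g = pair F f' g' -> f = f' /\ g = g'.
Proof.
  intros E; split.
  - rewrite <- (pair_pr1 F _ _ _ f g), E, pair_pr1; reflexivity.
  - rewrite <- (pair_pr2 F _ _ _ f g), E, pair_pr2; reflexivity.
Qed.

Definition prodmap {X1 X2 Y1 Y2 : K} (p1 : hom X1 Y1) (p2 : hom X2 Y2) :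
  hom (prod F X1 X2) (prod F Y1 Y2) :=
  pair F (p1 ∘ pr1 F X1 X2) (p2 ∘ pr2 F X1 X2).

Lemma prodmap_pair (T X1 X2 Y1 Y2 : K) (p1 : hom X1 Y1) (p2 : hom X2 Y2)
  (a : hom T X1) (b : hom T X2) :
  prodmap p1 p2 ∘ pair F a b = pair F (p1 ∘ a) (p2 ∘ b).
Proof.
  unfold prodmap; rewrite pair_comp, <- !comp_assoc, pair_pr1, pair_pr2.
  reflexivity.
Qed.

Lemma prodmap_split (X1 X2 Y1 Y2 : K) (p1 : hom X1 Y1) (p2 : hom X2 Y2) :
  prodmap p1 p2 = prodmap (idm Y1) p2 ∘ prodmap p1 (idm X2).
Proof.
  unfold prodmap at 3; rewrite prodmap_pair, !comp_id_l.
  reflexivity.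
Qed.

Lemma is_pullback_to_fin (A B : K) :
  is_pullback (to_fin F B) (to_fin F A) (pr2 F A B) (pr1 F A B).
Proof.
  split.
  - rewrite (to_fin_unique F _ (to_fin F B ∘ pr2 F A B)),
            (to_fin_unique F _ (to_fin F A ∘ pr1 F A B)).
    reflexivity.
  - intros T a b _; exists (pair F b a); split.
    + split; [apply pair_pr2 | apply pair_pr1].
    + intros u [E1 E2]; symmetry; apply pair_unique; assumption.
Qed.

Lemma is_pullback_prodmap_l (Y Z E : K) (p : hom E Y) :
  is_pullback (pr1 F Y Z) p (prodmap p (idm Z)) (pr1 F E Z).
Proof.
  unfold prodmap; split.
  - apply pair_pr1.
  - intros T a b Eab; exists (pair F b (pr2 F Y Z ∘ a)); split.
    + split.
      * rewrite pair_comp, <- !comp_assoc, pair_pr1, pair_pr2, comp_id_l, <- Eab.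
        apply pair_eta.
      * apply pair_pr1.
    + intros u [E1 E2]; symmetry; apply pair_unique; [assumption|].
      rewrite <- E1, comp_assoc, pair_pr2, comp_id_l; reflexivity.
Qed.

Lemma is_pullback_prodmap_r (Y Z E : K) (p : hom E Y) :
  is_pullback (pr2 F Z Y) p (prodmap (idm Z) p) (pr2 F Z E).
Proof.
  unfold prodmap; split.
  - apply pair_pr2.
  - intros T a b Eab; exists (pair F (pr1 F Z Y ∘ a) b); split.
    + split.
      * rewrite pair_comp, <- !comp_assoc, pair_pr1, pair_pr2, comp_id_l, <- Eab.
        apply pair_eta.
      * apply pair_pr2.
    + intros u [E1 E2]; symmetry; apply pair_unique; [|assumption].
      rewrite <- E1, comp_assoc, pair_pr1, comp_id_l; reflexivity.
Qed.

End Products.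

Lemma is_pullback_sym {K : Category} (X E Y Q : K) (f : hom X Y) (p : hom E Y)
  (p' : hom Q X) (f' : hom Q E) :
  is_pullback f p p' f' -> is_pullback p f f' p'.
Proof.
  intros [Ecomm Huniv]; split; [symmetry; exact Ecomm|].
  intros T a b Eab.
  destruct (Huniv T b a (eq_sym Eab)) as [u [[E1 E2] Hu]].
  exists u; split; [tauto|].
  intros u' [E1' E2']; apply Hu; tauto.
Qed.

Section PCategoryFacts.
Context {PC : PCategory}.
Local Notation F := (fp PC).

Lemma WE_idm (A : PC) : WE (idm A).
Proof. apply WE_iso; exists (idm A); rewrite comp_id_l; split; reflexivity. Qed.

Lemma Fib_pr2 (A B : PC) : Fib (pr2 F A B).
Proof. eapply pullback_Fib; [apply is_pullback_to_fin | apply Fib_final]. Qed.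

Lemma Fib_prodmap {X1 X2 Y1 Y2 : PC} (p1 : hom X1 Y1) (p2 : hom X2 Y2) :
  Fib p1 -> Fib p2 -> Fib (prodmap F p1 p2).
Proof.
  intros F1 F2; rewrite prodmap_split.
  apply Fib_comp; eapply pullback_Fib;
    [apply is_pullback_prodmap_l | exact F1 | apply is_pullback_prodmap_r | exact F2].
Qed.

Lemma WE_prodmap {X1 X2 Y1 Y2 : PC} (p1 : hom X1 Y1) (p2 : hom X2 Y2) :
  Fib p1 -> WE p1 -> Fib p2 -> WE p2 -> WE (prodmap F p1 p2).
Proof.
  intros F1 W1 F2 W2; rewrite prodmap_split.
  apply WE_comp; eapply pullback_WE;
    [apply is_pullback_prodmap_l | exact F1 | exact W1
    | apply is_pullback_prodmap_r | exact F2 | exact W2].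
Qed.

Lemma homotopic_comp_l {X Y Z : PC} (v : hom Y Z) (f f' : hom X Y) :
  homotopic f f' -> homotopic (v ∘ f) (v ∘ f').
Proof.
  intros [h [E0 E1]]; exists (fmap (P PC) v ∘ h); split.
  - rewrite comp_assoc, (delta0_nat PC); simpl; rewrite <- comp_assoc, E0; reflexivity.
  - rewrite comp_assoc, (delta1_nat PC); simpl; rewrite <- comp_assoc, E1; reflexivity.
Qed.

Lemma homotopic_comp_r {T X Y : PC} (k : hom T X) (f f' : hom X Y) :
  homotopic f f' -> homotopic (f ∘ k) (f' ∘ k).
Proof.
  intros [h [E0 E1]]; exists (h ∘ k).
  rewrite !comp_assoc, E0, E1; split; reflexivity.
Qed.

Lemma path_comparison_trivial_fibration {Q B : PC} {q : hom Q B} :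
  Fib q -> WE q ->
  exists (R : PC) (r1 : hom R (prod F Q Q)) (r2 : hom R (P PC B)) (u : hom (P PC Q) R),
    is_pullback (prodmap F q q) (pair F (delta0 PC B) (delta1 PC B)) r1 r2 /\
    r1 ∘ u = pair F (delta0 PC Q) (delta1 PC Q) /\ Fib u /\ WE u.
Proof.
  intros Fq Wq.
  destruct (pullback_exists PC _ _ _ (prodmap F q q) _ (Fib_delta01 PC B))
    as [R [r1 [r2 pbR]]].
  assert (Ecomm : prodmap F q q ∘ pair F (delta0 PC Q) (delta1 PC Q) =
                  pair F (delta0 PC B) (delta1 PC B) ∘ fmap (P PC) q).
  { rewrite prodmap_pair, pair_comp, (delta0_nat PC), (delta1_nat PC); reflexivity. }
  destruct (proj2 pbR _ _ _ Ecomm) as [u [[Eu1 Eu2] _]].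
  assert (Wr2 : WE r2).
  { eapply pullback_WE; [apply is_pullback_sym; exact pbR | |].
    - apply Fib_prodmap; assumption.
    - apply WE_prodmap; assumption. }
  exists R, r1, r2, u; split; [exact pbR | split; [exact Eu1 | split]].
  - eapply P5; eassumption.
  - eapply WE_2of3_r; [exact Wr2|]; rewrite Eu2; apply P_WE; exact Wq.
Qed.

Lemma trivial_fibration_reflects_homotopy {C Q B : PC} (q : hom Q B) {a b : hom C Q} :
  cofibrant C -> Fib q -> WE q -> homotopic (q ∘ a) (q ∘ b) -> homotopic a b.
Proof.
  intros hC Fq Wq [h [E0 E1]].
  destruct (path_comparison_trivial_fibration Fq Wq)
    as [R [r1 [r2 [u [pbR [Eu1 [Fu Wu]]]]]]].
  assert (Ecomm : prodmap F q q ∘ pair F a b = pair F (delta0 PC B) (delta1 PC B) ∘ h).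
  { rewrite prodmap_pair, pair_comp, E0, E1; reflexivity. }
  destruct (proj2 pbR _ _ _ Ecomm) as [k [[Ek1 _] _]].
  destruct (hC _ _ u Fu Wu k) as [H EH].
  exists H; apply pair_inj with (F := F).
  rewrite <- pair_comp, <- Eu1, <- comp_assoc, EH, Ek1; reflexivity.
Qed.

Lemma is_pullback_mapping_path {A B Q : PC} (w : hom A B) (p : hom Q A) (h : hom Q (P PC B)) :
  is_pullback w (delta0 PC B) p h ->
  is_pullback (pair F (w ∘ pr1 F A B) (pr2 F A B)) (pair F (delta0 PC B) (delta1 PC B))
              (pair F p (delta1 PC B ∘ h)) h.
Proof.
  intros pb; split.
  - rewrite !pair_comp, <- !comp_assoc, pair_pr1, pair_pr2, (proj1 pb); reflexivity.
  - intros T a b Eab.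
    rewrite !pair_comp, <- !comp_assoc in Eab.
    apply pair_inj in Eab; destruct Eab as [Eab0 Eab1].
    destruct (proj2 pb T (pr1 F A B ∘ a) b Eab0) as [v [[Ev1 Ev2] Hv]].
    exists v; split.
    + split; [|exact Ev2].
      rewrite pair_comp, Ev1, <- comp_assoc, Ev2, <- Eab1; apply pair_eta.
    + intros v' [E1 E2]; apply Hv; split; [|exact E2].
      rewrite <- E1, comp_assoc, pair_pr1; reflexivity.
Qed.

Lemma mapping_path_factorization {A B : PC} {w : hom A B} :
  WE w ->
  exists (Q : PC) (p : hom Q A) (q : hom Q B) (j : hom A Q) (h : hom Q (P PC B)),
    Fib q /\ WE q /\ p ∘ j = idm A /\ q ∘ j = w /\
    delta0 PC B ∘ h = w ∘ p /\ delta1 PC B ∘ h = q.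
Proof.
  intros Ww.
  destruct (pullback_exists PC _ _ _ w (delta0 PC B) (Fib_delta0 PC B)) as [Q [p [h pb]]].
  set (q := delta1 PC B ∘ h).
  assert (Fq : Fib q).
  { replace q with (pr2 F A B ∘ pair F p q) by apply pair_pr2.
    apply Fib_comp; [|apply Fib_pr2].
    eapply pullback_Fib; [apply is_pullback_mapping_path; exact pb | apply Fib_delta01]. }
  assert (Ej : w ∘ idm A = delta0 PC B ∘ (iota PC B ∘ w)).
  { rewrite comp_assoc, delta0_iota, comp_id_l, comp_id_r; reflexivity. }
  destruct (proj2 pb A _ _ Ej) as [j [[Ej1 Ej2] _]].
  assert (Eqj : q ∘ j = w).
  { unfold q; rewrite <- comp_assoc, Ej2, comp_assoc, delta1_iota, comp_id_l; reflexivity. }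
  assert (Wj : WE j).
  { eapply WE_2of3_r; [| rewrite Ej1; apply WE_idm].
    eapply pullback_WE; [exact pb | apply Fib_delta0 | apply WE_delta0]. }
  assert (Wq : WE q) by (eapply WE_2of3_l; [exact Wj | rewrite Eqj; exact Ww]).
  exists Q, p, q, j, h; repeat split; try assumption.
  exact (eq_sym (proj1 pb)).
Qed.

End PCategoryFacts.

Theorem proposition2p23 (PC : PCategory) (C A B : PC) (hC : cofibrant C)
  (w : hom A B) (hw : WE w) :
  (forall f f' : hom C A, homotopic f f' -> homotopic (w ∘ f) (w ∘ f')) /\
  (forall f f' : hom C A, homotopic (w ∘ f) (w ∘ f') -> homotopic f f') /\
  (forall g : hom C B, exists f : hom C A, homotopic (w ∘ f) g).
Proof.
  destruct (mapping_path_factorization hw)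
    as [Q [p [q [j [h [Fq [Wq [Epj [Eqj [Eh0 Eh1]]]]]]]]]].
  split; [|split].
  - apply homotopic_comp_l.
  - intros f f' Hw.
    assert (Hj : homotopic (j ∘ f) (j ∘ f')).
    { apply (trivial_fibration_reflects_homotopy q); try assumption.
      rewrite !comp_assoc, Eqj; exact Hw. }
    apply (homotopic_comp_l p) in Hj.
    rewrite !comp_assoc, Epj, !comp_id_l in Hj; exact Hj.
  - intros g; destruct (hC _ _ q Fq Wq g) as [k Ek].
    exists (p ∘ k); rewrite comp_assoc, <- Ek.
    apply homotopic_comp_r; exists h; split; assumption.
Qed.
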